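(* Let $\mathbb{K}$ be a class of frames definable in $\mathbf{K}$. Then $\mathbb{K}$ is definable in $\mathbf{K}\mathsf{biG}$ and $\mathbf{K}\mathsf{G}^2$.
   Context: A set of formulas $\Sigma$ defines a class of frames $\mathbb{K}$ in a logic $\mathbf{L}$ iff $\mathfrak{F}\in\mathbb{K}$ exactly when $\mathfrak{F}\models_\mathbf{L}\Sigma$. $\mathbf{K}$ is classical modal logic. $\mathbf{K}\mathsf{biG}$ is modal bi-Gödel logic on crisp frames: language over $\wedge,\vee,\rightarrow,\ominus$ (Gödel coimplication, $b\ominus_\mathsf{G}a=0$ if $b\le a$, else $b$), $\Box,\lozenge$, a single valuation into $[0,1]$ with Gödel operations ($\min$, $\max$, $a\rightarrow_\mathsf{G}b=1$ if $a\le b$ else $b$), $\Box$ as infimum and $\lozenge$ as supremum over $R$-successors, validity meaning value $1$ everywhere. $\mathbf{K}\mathsf{G}^2$ is its extension by a De Morgan negation $\neg$, interpreted on crisp frames with two valuations $v_1,v_2$ (support of truth/falsity) swapped by $\neg$, validity meaning $v_1=1$ and $v_2=0$ everywhere. $\mathbf{K}$ faithfully embeds into $\mathfrak{GK}^c$ (crisp modal Gödel logic) via $p\mapsto{\sim\sim}p$, where ${\sim}\phi:=\phi\rightarrow\mathbf{0}$; and $\mathbf{K}\mathsf{biG}$, $\mathbf{K}\mathsf{G}^2$ are conservative over $\mathfrak{GK}^c$ on crisp frames. *)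

From HB Require Import structures.
From mathcomp Require Import all_boot all_order all_algebra.
From mathcomp Require Import boolp classical_sets reals.
From mathcomp Require Import Rstruct.
From Stdlib Require Import Rdefinitions.

Set Implicit Arguments.
Unset Strict Implicit.
Unset Printing Implicit Defensive.
Import Order.TTheory GRing.Theory Num.Theory.
Local Open Scope classical_set_scope.
Local Open Scope ring_scope.

Record frame := Frame { world : Type ; rel : world -> world -> Prop }.

Definition frame_class := frame -> Prop.

Inductive fmK : Type :=
| KVar : nat -> fmK
| KBot : fmK
| KAnd : fmK -> fmK -> fmK
| KOr  : fmK -> fmK -> fmK
| KImp : fmK -> fmK -> fmK
| KBox : fmK -> fmK
| KDia : fmK -> fmK.

Fixpoint satK (F : frame) (V : nat -> world F -> Prop) (w : world F) (f : fmK)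
  : Prop :=
  match f with
  | KVar p => V p w
  | KBot => False
  | KAnd a b => satK V w a /\ satK V w b
  | KOr a b => satK V w a \/ satK V w b
  | KImp a b => satK V w a -> satK V w b
  | KBox a => forall u, rel w u -> satK V u a
  | KDia a => exists u, rel w u /\ satK V u a
  end.

Definition validK (F : frame) (Sigma : fmK -> Prop) : Prop :=
  forall f, Sigma f -> forall (V : nat -> world F -> Prop) (w : world F), satK V w f.

Definition definable_K (C : frame_class) : Prop :=
  exists Sigma : fmK -> Prop, forall F, C F <-> validK F Sigma.

Definition gmin (a b : R) : R := if a <= b then a else b.
Definition gmax (a b : R) : R := if a <= b then b else a.
Definition gimp (a b : R) : R := if a <= b then 1 else b.
Definition gcoimp (b a : R) : R := if b <= a then 0 else b.

(* infimum / supremum of the values at the R-successors of w;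
   the empty infimum is 1 and the empty supremum is 0 (values lie in [0,1]). *)
Definition box_inf (F : frame) (e : world F -> R) (w : world F) : R :=
  inf [set r : R | r = 1 \/ exists u, rel w u /\ r = e u].
Definition dia_sup (F : frame) (e : world F -> R) (w : world F) : R :=
  sup [set r : R | r = 0 \/ exists u, rel w u /\ r = e u].

Inductive fmG : Type :=
| GVar : nat -> fmG
| GBot : fmG
| GAnd : fmG -> fmG -> fmG
| GOr  : fmG -> fmG -> fmG
| GImp : fmG -> fmG -> fmG
| GCoimp : fmG -> fmG -> fmG
| GBox : fmG -> fmG
| GDia : fmG -> fmG
| GNeg : fmG -> fmG.              (* De Morgan negation (KG2 only) *)

Fixpoint biG_formula (f : fmG) : Prop :=
  match f with
  | GVar _ | GBot => True
  | GAnd a b | GOr a b | GImp a b | GCoimp a b => biG_formula a /\ biG_formula b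
  | GBox a | GDia a => biG_formula a
  | GNeg _ => False
  end.

Fixpoint evalBiG (F : frame) (v : nat -> world F -> R) (f : fmG) (w : world F)
  : R :=
  match f with
  | GVar p => v p w
  | GBot => 0
  | GAnd a b => gmin (evalBiG v a w) (evalBiG v b w)
  | GOr a b => gmax (evalBiG v a w) (evalBiG v b w)
  | GImp a b => gimp (evalBiG v a w) (evalBiG v b w)
  | GCoimp a b => gcoimp (evalBiG v a w) (evalBiG v b w)
  | GBox a => box_inf (fun u => evalBiG v a u) w
  | GDia a => dia_sup (fun u => evalBiG v a u) w
  | GNeg a => 0 (* not part of the KbiG language; never used *)
  end.

Definition unit_valuation (F : frame) (v : nat -> world F -> R) : Prop :=
  forall p w, 0 <= v p w <= 1.

Definition validBiG (F : frame) (Sigma : fmG -> Prop) : Prop :=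
  forall f, Sigma f -> forall (v : nat -> world F -> R),
    unit_valuation v -> forall w : world F, evalBiG v f w = 1.

Definition definable_KbiG (C : frame_class) : Prop :=
  exists Sigma : fmG -> Prop, (forall f, Sigma f -> biG_formula f) /\
    forall F, C F <-> validBiG F Sigma.

(* KG2 semantics: v1 (support of truth), v2 (support of falsity) *)
Fixpoint evalG2 (F : frame) (v1 v2 : nat -> world F -> R) (f : fmG)
  (w : world F) : R * R :=
  match f with
  | GVar p => (v1 p w, v2 p w)
  | GBot => (0, 1)
  | GAnd a b =>
      let: (x1, x2) := evalG2 v1 v2 a w in let: (y1, y2) := evalG2 v1 v2 b w in
      (gmin x1 y1, gmax x2 y2)
  | GOr a b =>
      let: (x1, x2) := evalG2 v1 v2 a w in let: (y1, y2) := evalG2 v1 v2 b w in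
      (gmax x1 y1, gmin x2 y2)
  | GImp a b =>
      let: (x1, x2) := evalG2 v1 v2 a w in let: (y1, y2) := evalG2 v1 v2 b w in
      (gimp x1 y1, gcoimp y2 x2)
  | GCoimp a b =>
      let: (x1, x2) := evalG2 v1 v2 a w in let: (y1, y2) := evalG2 v1 v2 b w in
      (gcoimp x1 y1, gimp y2 x2)
  | GBox a =>
      (box_inf (fun u => (evalG2 v1 v2 a u).1) w,
       dia_sup (fun u => (evalG2 v1 v2 a u).2) w)
  | GDia a =>
      (dia_sup (fun u => (evalG2 v1 v2 a u).1) w,
       box_inf (fun u => (evalG2 v1 v2 a u).2) w)
  | GNeg a => let: (x1, x2) := evalG2 v1 v2 a w in (x2, x1)
  end.

Definition validG2 (F : frame) (Sigma : fmG -> Prop) : Prop :=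
  forall f, Sigma f -> forall (v1 v2 : nat -> world F -> R),
    unit_valuation v1 -> unit_valuation v2 ->
    forall w : world F, evalG2 v1 v2 f w = (1, 0).

Definition definable_KG2 (C : frame_class) : Prop :=
  exists Sigma : fmG -> Prop, forall F, C F <-> validG2 F Sigma.

(* The Goedel double negation p |-> ~~p turns a classical formula into one whose
   value under any [0,1]-valuation v is crisp: it is 1 exactly when the formula
   holds classically for the valuation "p holds where v p > 0", and 0 otherwise,
   because all Goedel connectives, infima and suprema preserve {0,1} and act there
   as their classical counterparts.  In KG2 the falsity component is crisp as well,
   0 exactly when the formula holds for "p holds where v2 p < 1".  Every classical
   valuation arises from a {0,1}-valuation, so Sigma and its translation are valid
   on the same frames.  KbiG-validity follows from KG2-validity because, without
   De Morgan negation, the truth component of KG2 is the KbiG semantics of v1. *)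

From Pilot Require Import Defs.
From mathcomp Require Import all_boot all_order all_algebra.
From mathcomp Require Import boolp classical_sets reals.
From mathcomp Require Import Rstruct.
From Stdlib Require Import Rdefinitions.
Set Implicit Arguments.
Unset Strict Implicit.
Unset Printing Implicit Defensive.
Import Order.TTheory GRing.Theory Num.Theory.
Local Open Scope classical_set_scope.
Local Open Scope ring_scope.

Lemma gmin_bool (b c : bool) : gmin b%:R c%:R = (b && c)%:R :> R.
Proof. by case: b; case: c; rewrite /gmin /= ?lexx ?ler01 ?ler10. Qed.

Lemma gmax_bool (b c : bool) : gmax b%:R c%:R = (b || c)%:R :> R.
Proof. by case: b; case: c; rewrite /gmax /= ?lexx ?ler01 ?ler10. Qed.

Lemma gimp_bool (b c : bool) : gimp b%:R c%:R = (b ==> c)%:R :> R.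
Proof. by case: b; case: c; rewrite /gimp /= ?lexx ?ler01 ?ler10. Qed.

Lemma gcoimp_bool (b c : bool) : gcoimp b%:R c%:R = (b && ~~ c)%:R :> R.
Proof. by case: b; case: c; rewrite /gcoimp /= ?lexx ?ler01 ?ler10. Qed.

Lemma inf_lbound_mem (E : set R) x : E x -> lbound E x -> inf E = x.
Proof.
move=> Ex lbx; apply/le_anti/andP; split; last by apply: lb_le_inf => //; exists x.
by apply: ge_inf => //; exists x.
Qed.

Lemma sup_ubound_mem (E : set R) x : E x -> ubound E x -> sup E = x.
Proof.
move=> Ex ubx; apply/le_anti/andP; split; first by apply: ge_sup => //; exists x.
by apply: ub_le_sup => //; exists x.
Qed.

Section CrispModalities.
Variables (F : frame) (P : world F -> Prop) (w : world F).

Lemma box_inf_asbool :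
  box_inf (fun u => `[< P u >]%:R) w = `[< forall u, Defs.rel w u -> P u >]%:R.
Proof.
rewrite /box_inf; case: (pselect (forall u, Defs.rel w u -> P u)) => [allP|].
  rewrite asboolT //; apply: inf_lbound_mem; first by left.
  by move=> _ [->|[u [wu ->]]]; rewrite ?(asboolT (allP u wu)).
move=> /existsNP[u /not_implyP[wu Nu]]; rewrite asboolF => [|/(_ u wu)//].
apply: inf_lbound_mem; first by right; exists u; rewrite asboolF.
by move=> _ [->|[v [_ ->]]]; rewrite ?ler01 ?ler0n.
Qed.

Lemma dia_sup_asbool :
  dia_sup (fun u => `[< P u >]%:R) w = `[< exists u, Defs.rel w u /\ P u >]%:R.
Proof.
rewrite /dia_sup; case: (pselect (exists u, Defs.rel w u /\ P u)) => [[u [wu Pu]]|noP].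
  rewrite asboolT; last by exists u.
  apply: sup_ubound_mem; first by right; exists u; rewrite asboolT.
  by move=> _ [->|[v [_ ->]]]; rewrite ?ler01 ?lern1 ?leq_b1.
rewrite asboolF //; apply: sup_ubound_mem; first by left.
by move=> _ [->|[v [wv ->]]]; rewrite // asboolF // => Pv; apply: noP; exists v.
Qed.

End CrispModalities.

Fixpoint dneg_tr (f : fmK) : fmG :=
  match f with
  | KVar p => GImp (GImp (GVar p) GBot) GBot
  | KBot => GBot
  | KAnd a b => GAnd (dneg_tr a) (dneg_tr b)
  | KOr a b => GOr (dneg_tr a) (dneg_tr b)
  | KImp a b => GImp (dneg_tr a) (dneg_tr b)
  | KBox a => GBox (dneg_tr a)
  | KDia a => GDia (dneg_tr a)
  end.

Lemma biG_formula_dneg_tr f : biG_formula (dneg_tr f).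
Proof. by elim: f => //= *; split. Qed.

Definition supported (F : frame) (v : nat -> world F -> R) p w : Prop := 0 < v p w.

Lemma evalBiG_dneg_tr (F : frame) (v : nat -> world F -> R) f w :
  evalBiG v (dneg_tr f) w = `[< satK (supported v) w f >]%:R.
Proof.
elim: f w => [p||a IHa b IHb|a IHa b IHb|a IHa b IHb|a IHa|a IHa] w /=.
- by rewrite asboolb /gimp; case: leP; rewrite ?ler10 ?lexx.
- by rewrite asboolF.
- by rewrite IHa IHb gmin_bool asbool_and.
- by rewrite IHa IHb gmax_bool asbool_or.
- by rewrite IHa IHb gimp_bool asbool_imply.
- by rewrite (funext IHa) box_inf_asbool.
- by rewrite (funext IHa) dia_sup_asbool.
Qed.

Lemma evalG2_fst (F : frame) (v1 v2 : nat -> world F -> R) f w :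
  biG_formula f -> (evalG2 v1 v2 f w).1 = evalBiG v1 f w.
Proof.
elim: f w => [||a IHa b IHb|a IHa b IHb|a IHa b IHb|a IHa b IHb|a IHa|a IHa|//] w //=.
1-4: move=> [fa fb]; case: (evalG2 v1 v2 a w) (IHa w fa) => x1 x2 /= <-;
     by case: (evalG2 v1 v2 b w) (IHb w fb) => y1 y2 /= <-.
1,2: by move=> fa; congr (_ _ w); apply/funext => u; apply: IHa.
Qed.

Definition unrefuted (F : frame) (v : nat -> world F -> R) p w : Prop := v p w < 1.

Lemma evalG2_snd_dneg_tr (F : frame) (v1 v2 : nat -> world F -> R) f w :
  (evalG2 v1 v2 (dneg_tr f) w).2 = `[< ~ satK (unrefuted v2) w f >]%:R.
Proof.
elim: f w => [p||a IHa b IHb|a IHa b IHb|a IHa b IHb|a IHa|a IHa] w /=.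
- by rewrite asbool_neg asboolb /gcoimp; case: leP; rewrite ?ler10 ?lexx.
- by rewrite asboolT.
- case: (evalG2 v1 v2 (dneg_tr a) w) (IHa w) => x1 x2 /= ->.
  case: (evalG2 v1 v2 (dneg_tr b) w) (IHb w) => y1 y2 /= ->.
  by rewrite gmax_bool !asbool_neg asbool_and negb_and.
- case: (evalG2 v1 v2 (dneg_tr a) w) (IHa w) => x1 x2 /= ->.
  case: (evalG2 v1 v2 (dneg_tr b) w) (IHb w) => y1 y2 /= ->.
  by rewrite gmin_bool !asbool_neg asbool_or negb_or.
- case: (evalG2 v1 v2 (dneg_tr a) w) (IHa w) => x1 x2 /= ->.
  case: (evalG2 v1 v2 (dneg_tr b) w) (IHb w) => y1 y2 /= ->.
  by rewrite gcoimp_bool !asbool_neg asbool_imply negbK negb_imply andbC.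
- rewrite (funext IHa) dia_sup_asbool; congr ((nat_of_bool _)%:R); apply: asbool_equiv_eq.
  by rewrite -existsNE; split=> -[u H]; exists u; apply/not_implyP.
- rewrite (funext IHa) box_inf_asbool; congr ((nat_of_bool _)%:R); apply: asbool_equiv_eq.
  rewrite -forallNE; split=> [H u [wu Su]|H u wu Su].
  + exact: H u wu Su.
  + exact: H u (conj wu Su).
Qed.

Section Validity.
Variable F : frame.

Definition crisp_valuation (V : nat -> world F -> Prop) : nat -> world F -> R :=
  fun p w => `[< V p w >]%:R.

Lemma unit_valuation_crisp V : unit_valuation (crisp_valuation V).
Proof. by move=> p w; rewrite ler0n lern1 leq_b1. Qed.

Lemma supported_crisp V : supported (crisp_valuation V) = V.
Proof. by apply/funext=> p; apply/funext=> w; rewrite /supported ltr0n lt0b asboolE. Qed.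

Lemma validG2_validBiG (S : fmG -> Prop) :
  (forall f, S f -> biG_formula f) -> validG2 F S -> validBiG F S.
Proof.
move=> S_biG valid f Sf v v_unit w.
by rewrite -(evalG2_fst v v w (S_biG f Sf)) (valid f Sf v v v_unit v_unit w).
Qed.

Variable Sigma : fmK -> Prop.

Lemma validK_validG2 : validK F Sigma -> validG2 F (dneg_tr @` Sigma).
Proof.
move=> valid _ [g Sg <-] v1 v2 _ _ w.
rewrite [LHS]surjective_pairing evalG2_fst; last exact: biG_formula_dneg_tr.
by rewrite evalBiG_dneg_tr evalG2_snd_dneg_tr asbool_neg !asboolT //; apply: valid.
Qed.

Lemma validBiG_validK : validBiG F (dneg_tr @` Sigma) -> validK F Sigma.
Proof.
move=> valid g Sg V w.
have := valid _ (imageP dneg_tr Sg) _ (unit_valuation_crisp V) w.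
by rewrite evalBiG_dneg_tr supported_crisp => /eqP; rewrite pnatr_eq1 eqb1 => /asboolW.
Qed.

End Validity.

Theorem theorem1 (C : frame_class) :
  definable_K C -> definable_KbiG C /\ definable_KG2 C.
Proof.
move=> [Sigma defC].
have image_biG f : (dneg_tr @` Sigma) f -> biG_formula f.
  by move=> [g _ <-]; apply: biG_formula_dneg_tr.
split.
- exists (dneg_tr @` Sigma); split=> // F; rewrite defC.
  by split=> [/validK_validG2/(validG2_validBiG image_biG)|/validBiG_validK].
- exists (dneg_tr @` Sigma) => F; rewrite defC.
  by split=> [/validK_validG2|/(validG2_validBiG image_biG)/validBiG_validK].
Qed.
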